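(* Let $B,V$ be non-empty disjoint compact subsets of $\mathbf S^3$. There is a constant $C>0$ such that for any $x,x'\in B$, any $u,u'\in\mathcal L_{\mathbb C}$ such that the chain $L_u$ passes through $x$, the chain $L_{u'}$ passes through $x'$, and both meet $V$, and any $r>0$, \[\pi_x^{-1}(B(u,r))\cap V\subset\pi_{x'}^{-1}\big(B(u',C(r+d_E(u,u')))\big),\] where $B(u,r)$ denotes the closed $d_E$-ball in $\mathbb P^2_{\mathbb C}$.
   Context: On $\mathbb{C}^3$: $u\cdot v=\sum u_i\bar v_i$, $\|u\|=\sqrt{u\cdot u}$, $\langle u,v\rangle=u_0\bar v_0-u_1\bar v_1-u_2\bar v_2$, $q(u)=\langle u,u\rangle$, $\|u\wedge v\|^2=\|u\|^2\|v\|^2-|u\cdot v|^2$. On $\mathbb P^2_{\mathbb C}$, $d_E(u,v)=\|u\wedge v\|/(\|u\|\|v\|)$. $\mathbf S^3=\{u:q(u)=0\}$. $\mathcal L_{\mathbb C}=\{w:q(w)<0\}$, $w^\perp=\{u:\langle u,w\rangle=0\}$, $L_w=w^\perp\cap\mathbf S^3$ (a chain). For $x\in\mathbf S^3$ and $y\in\mathbf S^3\setminus\{x\}$, $\pi_x(y)$ is the unique intersection point of $x^\perp$ and $y^\perp$; $\pi_x^{-1}(A)=\{y\in\mathbf S^3\setminus\{x\}:\pi_x(y)\in A\}$. *)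

From mathcomp Require Import all_boot all_order all_algebra.
From mathcomp Require Import all_classical all_reals all_analysis.
From mathcomp Require Import complex.
Import Order.TTheory GRing.Theory Num.Theory.
Import numFieldNormedType.Exports.
Set Implicit Arguments.
Unset Strict Implicit.
Unset Printing Implicit Defensive.
Local Open Scope ring_scope.
Local Open Scope classical_set_scope.

(* Vectors of C^3, C = R[i]; points of P^2_C are represented by nonzero
   vectors, and subsets of P^2_C by cones (sets closed under nonzero scaling). *)
Notation C3 R := 'rV[R[i]]_3.

Section Defs.
Variable R : realType.

Definition hdot (u v : C3 R) : R[i] := \sum_(i < 3) u ord0 i * (v ord0 i)^*.
Definition enorm (u : C3 R) : R := Num.sqrt (complex.Re (hdot u u)).
Definition abs2 (z : R[i]) : R := complex.Re (z * z^*).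
Definition hform (u v : C3 R) : R[i] :=
  u ord0 0 * (v ord0 0)^* - u ord0 1 * (v ord0 1)^* - u ord0 2 * (v ord0 2)^*.
Definition qf (u : C3 R) : R := complex.Re (hform u u).
(* ||u /\ v||^2 = ||u||^2 ||v||^2 - |u.v|^2 *)
Definition wedge2 (u v : C3 R) : R :=
  enorm u ^+ 2 * enorm v ^+ 2 - abs2 (hdot u v).
Definition dE (u v : C3 R) : R := Num.sqrt (wedge2 u v) / (enorm u * enorm v).

Definition proj_eq (u v : C3 R) : Prop := exists c : R[i], c != 0 /\ u = c *: v.

(* S^3 = {q = 0} (projectivized null cone) *)
Definition S3 (u : C3 R) : Prop := u != 0 /\ qf u = 0.
Definition LC (w : C3 R) : Prop := w != 0 /\ qf w < 0.
(* x lies on the chain L_w = w^perp /\ S^3 *)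
Definition on_chain (w x : C3 R) : Prop := S3 x /\ hform x w = 0.

(* z represents pi_x(y), the (unique, for y /= x in S^3) intersection
   point of x^perp and y^perp *)
Definition is_pi (x y z : C3 R) : Prop := z != 0 /\ hform z x = 0 /\ hform z y = 0.
Definition pi_preim (x : C3 R) (A : C3 R -> Prop) (y : C3 R) : Prop :=
  S3 y /\ ~ proj_eq y x /\ exists z, is_pi x y z /\ A z.
Definition dball (u : C3 R) (r : R) (z : C3 R) : Prop := z != 0 /\ dE z u <= r.

Definition proj_set (A : set (C3 R)) : Prop :=
  (forall u, A u -> u != 0) /\ (forall u (c : R[i]), A u -> c != 0 -> A (c *: u)).

Definition realify (u : C3 R) : 'M[R]_(2, 3) :=
  \matrix_(i < 2, j < 3) (if i == 0 then complex.Re (u ord0 j) else complex.Im (u ord0 j)).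

(* compactness in P^2_C (quotient topology of the unit sphere S^5 of C^3):
   the unit representatives form a compact subset of C^3 = R^6 *)
Definition proj_compact (A : set (C3 R)) : Prop :=
  compact (realify @` (A `&` [set u | enorm u = 1])).
End Defs.

From mathcomp Require Import all_boot all_order all_algebra.
From mathcomp Require Import all_classical all_reals all_analysis.
From mathcomp Require Import complex.
From mathcomp Require Import ring lra.
Import Order.TTheory GRing.Theory Num.Theory.
Import numFieldNormedType.Exports.
Import Normc.
Local Open Scope ring_scope.
Local Open Scope classical_set_scope.
Set Implicit Arguments.
Unset Strict Implicit.

(* Let y lie in V and let p' represent pi_x'(y).  Writing Jw for the vector
   with <v, w> = v . Jw, p' is the conjugated cross product of Jx' and Jy,
   and since u' is orthogonal to Jx' one computes
     d_E(p', u') = |cos(u', Jy)| / d_E(x', y),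
   where |cos(a, b)| = |a . b| / (||a|| ||b||).  The numerator is 1-Lipschitz
   in a for d_E and vanishes at a = pi_x(y), to which Jy is orthogonal, so it
   is at most r + d_E(u, u').  The denominator is bounded below: for unit
   vectors with a suitably rotated phase, the Euclidean distance in R^6 is at
   most sqrt 2 times d_E, and the unit representatives of B and V form
   disjoint compact sets. *)

Ltac split_coords :=
  repeat match goal with
  | |- context [@fun_of_matrix _ _ _ ?v ord0 ?j] =>
      let p := fresh "p" in let q := fresh "q" in
      move: (@fun_of_matrix _ _ _ v ord0 j) => [p q]
  end; simpc; rewrite /=.

Section HermitianGeometry.
Variable R : realType.
Implicit Types (a b u v w X Y : C3 R) (z : R[i]).

Definition sqnorm a : R := complex.Re (hdot a a).

Lemma hdotE a b : hdot a b =
  a ord0 0 * (b ord0 0)^* + a ord0 1 * (b ord0 1)^* + a ord0 2 * (b ord0 2)^*.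
Proof.
rewrite /hdot !big_ord_recr big_ord0 /= add0r.
by congr (_ + _ + _); congr (a ord0 _ * (b ord0 _)^*); apply: val_inj.
Qed.

Lemma abs2E z : abs2 z = complex.Re z ^+ 2 + complex.Im z ^+ 2.
Proof. by case: z => p q; rewrite /abs2; simpc; rewrite /=; ring. Qed.

Lemma abs2_ge0 z : 0 <= abs2 z.
Proof. by rewrite abs2E addr_ge0 ?sqr_ge0. Qed.

Lemma abs2_eq0 z : abs2 z = 0 -> z = 0.
Proof.
case: z => p q; rewrite abs2E /= => /eqP.
by rewrite paddr_eq0 ?sqr_ge0 // !sqrf_eq0 => /andP[/eqP-> /eqP->].
Qed.

Lemma abs2M (c d : R[i]) : abs2 (c * d) = abs2 c * abs2 d.
Proof. by rewrite !abs2E; case: c d => [c c'] [d d']; simpc; rewrite /=; ring. Qed.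

Lemma normc_abs2 z : normc z = Num.sqrt (abs2 z).
Proof. by case: z => p q; rewrite abs2E. Qed.

Lemma normc_ge0 z : 0 <= normc z.
Proof. by rewrite normc_abs2 sqrtr_ge0. Qed.

Lemma normc_sqr z : normc z ^+ 2 = abs2 z.
Proof. by rewrite normc_abs2 sqr_sqrtr ?abs2_ge0. Qed.

Lemma normc_conj z : normc z^* = normc z.
Proof. by case: z => p q; rewrite /= sqrrN. Qed.

Lemma abs2_conj z : abs2 z^* = abs2 z.
Proof. by rewrite -!normc_sqr normc_conj. Qed.

Lemma normc_real (t : R) : 0 <= t -> normc t%:C%C = t.
Proof. by move=> t0; rewrite /= expr0n /= addr0 sqrtr_sqr ger0_norm. Qed.

Lemma sqnormE a :
  sqnorm a = abs2 (a ord0 0) + abs2 (a ord0 1) + abs2 (a ord0 2).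
Proof. by rewrite /sqnorm hdotE !abs2E; split_coords; ring. Qed.

Lemma sqnorm_ge0 a : 0 <= sqnorm a.
Proof. by rewrite sqnormE !addr_ge0 ?abs2_ge0. Qed.

Lemma ord3P (j : 'I_3) : [\/ j = 0, j = 1 | j = 2].
Proof.
by case: j => [[|[|[|]]]] // ?; [apply: Or31 | apply: Or32 | apply: Or33];
  apply: val_inj.
Qed.

Lemma abs2_le_sqnorm a (j : 'I_3) : abs2 (a ord0 j) <= sqnorm a.
Proof.
have := abs2_ge0 (a ord0 0); have := abs2_ge0 (a ord0 1).
have := abs2_ge0 (a ord0 2).
by rewrite sqnormE; case: (ord3P j) => ->; lra.
Qed.

Lemma sqnorm_eq0 a : sqnorm a = 0 -> a = 0.
Proof.
move=> a0; apply/rowP => j; rewrite mxE; apply: abs2_eq0.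
by apply/eqP; rewrite eq_le abs2_ge0 -a0 abs2_le_sqnorm.
Qed.

Lemma sqnorm_gt0 a : a != 0 -> 0 < sqnorm a.
Proof.
by move=> a0; rewrite lt_def sqnorm_ge0 andbT; apply: contra a0 => /eqP/sqnorm_eq0->.
Qed.

Lemma enorm_sqr a : enorm a ^+ 2 = sqnorm a.
Proof. by rewrite sqr_sqrtr ?sqnorm_ge0. Qed.

Lemma enorm_ge0 a : 0 <= enorm a.
Proof. exact: sqrtr_ge0. Qed.

Lemma enorm_gt0 a : a != 0 -> 0 < enorm a.
Proof. by move=> /sqnorm_gt0; rewrite sqrtr_gt0. Qed.

Lemma wedge2E a b : wedge2 a b = sqnorm a * sqnorm b - abs2 (hdot a b).
Proof. by rewrite /wedge2 !enorm_sqr. Qed.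

Lemma wedge2_lagrange a b : wedge2 a b =
  abs2 (a ord0 0 * b ord0 1 - a ord0 1 * b ord0 0)
  + abs2 (a ord0 0 * b ord0 2 - a ord0 2 * b ord0 0)
  + abs2 (a ord0 1 * b ord0 2 - a ord0 2 * b ord0 1).
Proof. by rewrite wedge2E /sqnorm !hdotE !abs2E; split_coords; ring. Qed.

Lemma wedge2_ge0 a b : 0 <= wedge2 a b.
Proof. by rewrite wedge2_lagrange !addr_ge0 ?abs2_ge0. Qed.

Lemma normc_hdot_le a b : normc (hdot a b) <= enorm a * enorm b.
Proof.
rewrite normc_abs2 -sqrtrM ?sqnorm_ge0 // ler_wsqrtr // -subr_ge0 -wedge2E.
exact: wedge2_ge0.
Qed.

Lemma dE_ge0 a b : 0 <= dE a b.
Proof. by rewrite divr_ge0 ?mulr_ge0 ?sqrtr_ge0 ?enorm_ge0. Qed.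

Lemma wedge2_gt0 a b : 0 < dE a b -> 0 < wedge2 a b.
Proof.
move=> dE0; rewrite lt_def wedge2_ge0 andbT; apply: contraTneq dE0 => W0.
by rewrite /dE W0 sqrtr0 mul0r ltxx.
Qed.

Lemma hdotZ (c d : R[i]) a b : hdot (c *: a) (d *: b) = c * d^* * hdot a b.
Proof.
rewrite !hdotE !mxE; case: c d => [c c'] [d d']; split_coords.
by congr (Complex _ _); ring.
Qed.

Lemma hdotZr (d : R[i]) a b : hdot a (d *: b) = d^* * hdot a b.
Proof. by rewrite -(scale1r a) hdotZ scale1r mul1r. Qed.

Lemma sqnormZ (c : R[i]) a : sqnorm (c *: a) = abs2 c * sqnorm a.
Proof.
rewrite /sqnorm hdotZ; case: (hdot a a) c => [p q] [c c'].
by rewrite /abs2; simpc; rewrite /=; ring.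
Qed.

Lemma enormZ (c : R[i]) a : enorm (c *: a) = normc c * enorm a.
Proof. by rewrite /enorm -/(sqnorm _) sqnormZ sqrtrM ?abs2_ge0 // -normc_abs2. Qed.

Lemma wedge2Z (c d : R[i]) a b :
  wedge2 (c *: a) (d *: b) = abs2 c * abs2 d * wedge2 a b.
Proof. by rewrite !wedge2E !sqnormZ hdotZ !abs2M abs2_conj; ring. Qed.

Lemma dEZ (c d : R[i]) a b : c != 0 -> d != 0 -> dE (c *: a) (d *: b) = dE a b.
Proof.
move=> c0 d0; rewrite /dE wedge2Z !enormZ !sqrtrM ?mulr_ge0 ?abs2_ge0 //.
rewrite -!normc_abs2.
have nc : normc c != 0 by apply: contra c0 => /eqP/eq0_normc->.
have nd : normc d != 0 by apply: contra d0 => /eqP/eq0_normc->.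
have [->|ea] := eqVneq (enorm a) 0; first by rewrite !(mulr0, mul0r) invr0 !mulr0.
have [->|eb] := eqVneq (enorm b) 0; first by rewrite !(mulr0, mul0r) invr0 !mulr0.
by field; rewrite nc nd ea eb.
Qed.

Lemma sqnormB a b : sqnorm (a - b) = sqnorm a + sqnorm b - 2 * complex.Re (hdot a b).
Proof. by rewrite /sqnorm !hdotE !mxE; split_coords; ring. Qed.

Lemma sqnorm0 : sqnorm 0 = 0.
Proof. by rewrite /sqnorm hdotE !mxE !mul0r !addr0. Qed.

Definition Jvec a : C3 R := \row_(j < 3) (if j == 0 then a ord0 j else - a ord0 j).

Lemma JvecE a :
  [/\ Jvec a ord0 0 = a ord0 0, Jvec a ord0 1 = - a ord0 1 & Jvec a ord0 2 = - a ord0 2].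
Proof. by rewrite !mxE. Qed.

Lemma hdot_Jvec a b : hdot a (Jvec b) = hform a b.
Proof.
rewrite hdotE /hform; have [-> -> ->] := JvecE b; split_coords.
by congr (Complex _ _); ring.
Qed.

Lemma hdot_Jvec2 a b : hdot (Jvec a) (Jvec b) = hdot a b.
Proof.
rewrite !hdotE; have [-> -> ->] := JvecE a; have [-> -> ->] := JvecE b.
by split_coords; congr (Complex _ _); ring.
Qed.

Lemma hformC a b : hform a b = (hform b a)^*.
Proof. by rewrite /hform; split_coords; congr (Complex _ _); ring. Qed.

Lemma enorm_Jvec a : enorm (Jvec a) = enorm a.
Proof. by rewrite /enorm hdot_Jvec2. Qed.

Lemma Jvec_neq0 a : a != 0 -> Jvec a != 0.
Proof.
move=> /sqnorm_gt0; apply: contraTneq => Ja0.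
by rewrite /sqnorm -hdot_Jvec2 Ja0 -/(sqnorm 0) sqnorm0 ltxx.
Qed.

Lemma wedge2_Jvec a b : wedge2 (Jvec a) (Jvec b) = wedge2 a b.
Proof. by rewrite /wedge2 !enorm_Jvec hdot_Jvec2. Qed.

Lemma dE_Jvec a b : dE (Jvec a) (Jvec b) = dE a b.
Proof. by rewrite /dE wedge2_Jvec !enorm_Jvec. Qed.

Definition hcross X Y : C3 R := \row_(j < 3)
  (if j == 0 then (X ord0 1 * Y ord0 2 - X ord0 2 * Y ord0 1)^*
   else if j == 1 then (X ord0 2 * Y ord0 0 - X ord0 0 * Y ord0 2)^*
   else (X ord0 0 * Y ord0 1 - X ord0 1 * Y ord0 0)^*).

Lemma hcrossE X Y :
  [/\ hcross X Y ord0 0 = (X ord0 1 * Y ord0 2 - X ord0 2 * Y ord0 1)^*,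
      hcross X Y ord0 1 = (X ord0 2 * Y ord0 0 - X ord0 0 * Y ord0 2)^*
    & hcross X Y ord0 2 = (X ord0 0 * Y ord0 1 - X ord0 1 * Y ord0 0)^*].
Proof. by rewrite !mxE. Qed.

Lemma hdot_hcrossl X Y : hdot (hcross X Y) X = 0.
Proof.
rewrite hdotE; have [-> -> ->] := hcrossE X Y.
by split_coords; congr (Complex _ _); ring.
Qed.

Lemma hdot_hcrossr X Y : hdot (hcross X Y) Y = 0.
Proof.
rewrite hdotE; have [-> -> ->] := hcrossE X Y.
by split_coords; congr (Complex _ _); ring.
Qed.

Lemma sqnorm_hcross X Y : sqnorm (hcross X Y) = wedge2 X Y.
Proof.
rewrite wedge2E /sqnorm !hdotE abs2E; have [-> -> ->] := hcrossE X Y.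
by split_coords; ring.
Qed.

Lemma wedge2_hcross X Y u : wedge2 (hcross X Y) u =
  sqnorm X * abs2 (hdot u Y) + sqnorm Y * abs2 (hdot u X)
  - 2 * complex.Re (hdot u X * hdot X Y * hdot Y u).
Proof.
rewrite wedge2E /sqnorm !hdotE !abs2E; have [-> -> ->] := hcrossE X Y.
by split_coords; ring.
Qed.

Lemma is_pi_hcross x y : 0 < wedge2 x y -> is_pi x y (hcross (Jvec x) (Jvec y)).
Proof.
move=> W0; split; last by rewrite -!hdot_Jvec hdot_hcrossl hdot_hcrossr.
apply: contraTneq W0 => /(congr1 sqnorm).
by rewrite sqnorm_hcross wedge2_Jvec sqnorm0 => ->; rewrite ltxx.
Qed.

Definition hcos a Y : R := normc (hdot a Y) / (enorm a * enorm Y).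

Lemma hcos_orth a Y : hdot a Y = 0 -> hcos a Y = 0.
Proof. by rewrite /hcos => ->; rewrite normc0 mul0r. Qed.

Lemma normc_hdot_triangle a b Y : a != 0 ->
  normc (hdot b Y) * enorm a <=
  normc (hdot a Y) * enorm b + Num.sqrt (wedge2 a b) * enorm Y.
Proof.
move=> a0; have A0 := enorm_gt0 a0.
(* [w] is [sqnorm a] times the component of [b] orthogonal to [a]. *)
pose w := (sqnorm a)%:C%C *: b - hdot b a *: a.
have hw : hdot w Y = (sqnorm a)%:C%C * hdot b Y - hdot b a * hdot a Y.
  by rewrite /w /sqnorm !hdotE !mxE; split_coords; congr (Complex _ _); ring.
have sw : sqnorm w = sqnorm a * wedge2 a b.
  by rewrite wedge2E /w /sqnorm !hdotE !mxE abs2E; split_coords; ring.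
have ew : enorm w = enorm a * Num.sqrt (wedge2 a b).
  by rewrite /enorm -/(sqnorm w) sw sqrtrM ?sqnorm_ge0.
have CS := normc_hdot_le w Y; rewrite hw ew in CS.
have tri := le_normcD ((sqnorm a)%:C%C * hdot b Y - hdot b a * hdot a Y)
  (hdot b a * hdot a Y).
rewrite subrK normcM normc_real ?sqnorm_ge0 // -{1}enorm_sqr in tri.
have hba : normc (hdot b a * hdot a Y) <= enorm b * enorm a * normc (hdot a Y).
  by rewrite normcM ler_wpM2r ?normc_ge0 ?normc_hdot_le.
rewrite -(ler_pM2l A0).
have := sqrtr_ge0 (wedge2 a b); have := enorm_ge0 Y; have := enorm_ge0 b.
nra.
Qed.

Lemma hcos_triangle a b Y : a != 0 -> b != 0 -> Y != 0 ->
  hcos b Y <= hcos a Y + dE a b.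
Proof.
move=> a0 b0 Y0; have A0 := enorm_gt0 a0; have B0 := enorm_gt0 b0.
have Y0' := enorm_gt0 Y0.
have P0 : 0 < enorm a * enorm b * enorm Y by rewrite !mulr_gt0.
rewrite -(ler_pM2r P0).
have -> : hcos b Y * (enorm a * enorm b * enorm Y) = normc (hdot b Y) * enorm a.
  by rewrite /hcos; field; rewrite !gt_eqF.
have -> : (hcos a Y + dE a b) * (enorm a * enorm b * enorm Y) =
    normc (hdot a Y) * enorm b + Num.sqrt (wedge2 a b) * enorm Y.
  by rewrite /hcos /dE; field; rewrite !gt_eqF.
exact: normc_hdot_triangle.
Qed.

Lemma dE_hcross X Y u : hdot u X = 0 -> X != 0 -> u != 0 -> Y != 0 ->
  0 < wedge2 X Y -> dE (hcross X Y) u = hcos u Y / dE X Y.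
Proof.
move=> uX X0 u0 Y0 W0.
have Wu : wedge2 (hcross X Y) u = sqnorm X * abs2 (hdot u Y).
  by rewrite wedge2_hcross uX /abs2 !(mul0r, mulr0) /= !(mulr0, mul0r, subr0, addr0).
have eX : enorm (hcross X Y) = Num.sqrt (wedge2 X Y).
  by rewrite /enorm -/(sqnorm _) sqnorm_hcross.
rewrite /dE Wu eX sqrtrM ?sqnorm_ge0 // -normc_abs2 -/(enorm X) /hcos.
have := enorm_gt0 X0; have := enorm_gt0 u0; have := enorm_gt0 Y0.
have : 0 < Num.sqrt (wedge2 X Y) by rewrite sqrtr_gt0.
by move=> *; field; rewrite !gt_eqF.
Qed.

Lemma dE_hcross_le (x y z u u' : C3 R) :
  u != 0 -> u' != 0 -> z != 0 -> x != 0 -> y != 0 ->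
  0 < wedge2 x y -> hform x u' = 0 -> hform z y = 0 ->
  dE (hcross (Jvec x) (Jvec y)) u' <= (dE z u + dE u u') / dE x y.
Proof.
move=> u0 u'0 z0 x0 y0 W0 xu' zy; have Jy0 := Jvec_neq0 y0.
have u'Jx : hdot u' (Jvec x) = 0 by rewrite hdot_Jvec hformC xu' conjC0.
rewrite dE_hcross ?Jvec_neq0 ?wedge2_Jvec // dE_Jvec.
have zJy : hcos z (Jvec y) = 0 by rewrite hcos_orth ?hdot_Jvec.
have := hcos_triangle u0 u'0 Jy0; have := hcos_triangle z0 u0 Jy0.
rewrite zJy add0r => h1 h2.
by rewrite ler_wpM2r ?invr_ge0 ?dE_ge0 //; lra.
Qed.

Lemma unit_rescale a : a != 0 -> exists2 c : R[i], c != 0 & enorm (c *: a) = 1.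
Proof.
move=> a0; have A0 := enorm_gt0 a0.
exists (enorm a)^-1%:C%C; last by rewrite enormZ normc_real ?invr_ge0 ?ltW ?mulVf ?gt_eqF.
by apply/eqP => -[/eqP]; rewrite invr_eq0 gt_eqF.
Qed.

Lemma phase_rotation z : exists d : R[i], normc d = 1 /\ d^* * z = (normc z)%:C%C.
Proof.
have [->|z0] := eqVneq z 0; first by exists 1; rewrite normc1 mulr0 normc0.
have nz : normc z != 0 by apply: contra z0 => /eqP/eq0_normc->.
exists ((normc z)%:C%C / z)^*; rewrite conjCK divfK // normc_conj.
by rewrite normcM normcV normc_real ?normc_ge0 ?mulfV.
Qed.

Lemma realify_inj : injective (@realify R).
Proof.
move=> a b e; apply/rowP => j.
have := congr1 (fun M : 'M[R]_(2, 3) => M 0 j) e.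
have := congr1 (fun M : 'M[R]_(2, 3) => M 1 j) e.
by rewrite /= !mxE /=; case: (a ord0 j) (b ord0 j) => p q [p' q'] /= -> ->.
Qed.

Lemma realify_dist_le a b : `|realify a - realify b| <= Num.sqrt (sqnorm (a - b)).
Proof.
rewrite [X in X <= _]mx_normrE; apply: bigmax_le => [|[i j] _ /=]; first exact: sqrtr_ge0.
rewrite -sqrtr_sqr ler_wsqrtr // (le_trans _ (abs2_le_sqnorm _ j)) // abs2E !mxE.
by case: (i == 0); case: (a ord0 j) (b ord0 j) => p q [p' q'] /=;
  rewrite ?lerDl ?lerDr sqr_ge0.
Qed.

Lemma realify_phase_dist b v : enorm b = 1 -> enorm v = 1 ->
  exists d : R[i], normc d = 1 /\
    `|realify b - realify (d *: v)| ^+ 2 <= 2 * dE b v ^+ 2.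
Proof.
move=> eb ev; have [d [nd dbv]] := phase_rotation (hdot b v).
exists d; split => //.
have sb : sqnorm b = 1 by rewrite -enorm_sqr eb expr1n.
have sv : sqnorm (d *: v) = 1 by rewrite -enorm_sqr enormZ nd ev mulr1 expr1n.
have c0 := normc_ge0 (hdot b v).
have c1 : normc (hdot b v) <= 1 by rewrite (le_trans (normc_hdot_le b v)) // eb ev mulr1.
have -> : dE b v ^+ 2 = 1 - normc (hdot b v) ^+ 2.
  rewrite /dE wedge2E sb -enorm_sqr ev eb expr1n !mul1r invr1 mulr1 -normc_sqr.
  by rewrite sqr_sqrtr // subr_ge0 expr_le1.
have := realify_dist_le b (d *: v); rewrite sqnormB sb sv hdotZr dbv /=.
have := normr_ge0 (realify b - realify (d *: v)).
set n := `|_| => n0 hn.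
have : n ^+ 2 <= 2 - 2 * normc (hdot b v).
  have S : 0 <= 1 + 1 - 2 * normc (hdot b v) by lra.
  by have := ler_pM n0 n0 hn hn; rewrite -!expr2 sqr_sqrtr //; lra.
nra.
Qed.

Lemma realify_gap (B V : set (C3 R)) :
  proj_set B -> proj_set V -> B !=set0 -> V !=set0 -> B `&` V = set0 ->
  proj_compact B -> proj_compact V ->
  exists2 del : R, 0 < del & forall b w, B b -> V w -> enorm b = 1 -> enorm w = 1 ->
    del <= `|realify b - realify w|.
Proof.
move=> [Bnz Bc] [Vnz Vc] [b0 Bb0] [v0 Vv0] BV cB cV.
rewrite /proj_compact in cB cV.
set KB := (@realify R) @` _ in cB; set KV := (@realify R) @` _ in cV.
have KBV : KB `*` KV !=set0.
  have [c c0 ec] := unit_rescale (Bnz _ Bb0).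
  have [c' c'0 ec'] := unit_rescale (Vnz _ Vv0).
  exists (realify (c *: b0), realify (c' *: v0)); split.
  - by exists (c *: b0) => //; split => //; apply: Bc.
  - by exists (c' *: v0) => //; split => //; apply: Vc.
have cont : {within KB `*` KV, continuous (fun pq => `|pq.1 - pq.2| : R)}.
  apply: continuous_subspaceT => pq.
  by apply: continuous_comp; [exact: sub_continuous | exact: norm_continuous].
have [[p q]] := compact_EVT_min KBV (compact_setX cB cV) cont.
rewrite in_setE => -[[b [Bb _] <-] [w [Vw _] <-]] /= Hmin.
exists `|realify b - realify w|.
  rewrite normr_gt0 subr_eq0; apply: contraPneq BV => /realify_inj bw.
  by apply/eqP/set0P; exists w; split => //; rewrite -bw.
move=> b' w' Bb' Vw' eb' ew'; apply: (Hmin (realify b', realify w')).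
by rewrite in_setE; split; [exists b' | exists w'].
Qed.

Lemma proj_compact_dE_gap (B V : set (C3 R)) :
  proj_set B -> proj_set V -> B !=set0 -> V !=set0 -> B `&` V = set0 ->
  proj_compact B -> proj_compact V ->
  exists2 m : R, 0 < m & forall b v, B b -> V v -> m <= dE b v.
Proof.
move=> pB pV neB neV BV cB cV; have [Bnz Bc] := pB; have [Vnz Vc] := pV.
have [del del0 Hdel] := realify_gap pB pV neB neV BV cB cV.
exists (del / 2) => [|b v Bb Vv]; first by rewrite divr_gt0.
have [c c0 eb] := unit_rescale (Bnz _ Bb).
have [c' c'0 ev] := unit_rescale (Vnz _ Vv).
rewrite -(dEZ _ _ c0 c'0).
have [d [nd hd]] := realify_phase_dist eb ev.
have d0 : d != 0 by apply: contra_eq_neq nd => ->; rewrite normc0 eq_sym oner_eq0.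
have := Hdel _ _ (Bc _ _ Bb c0) (Vc _ _ (Vc _ _ Vv c'0) d0) eb.
rewrite enormZ nd ev mulr1 => /(_ erefl).
have := normr_ge0 (realify (c *: b) - realify (d *: (c' *: v))).
have := dE_ge0 (c *: b) (c' *: v).
nra.
Qed.

End HermitianGeometry.

Unset Implicit Arguments.
Set Strict Implicit.

Theorem lemma5p12 (R : realType) (B V : set (C3 R)) :
  proj_set B -> proj_set V ->
  B `<=` S3 (R:=R) -> V `<=` S3 (R:=R) ->
  B !=set0 -> V !=set0 -> B `&` V = set0 ->
  proj_compact B -> proj_compact V ->
  exists Cst : R, 0 < Cst /\
    forall (x x' u u' : C3 R) (r : R),
      B x -> B x' -> LC u -> LC u' ->
      on_chain u x -> on_chain u' x' ->
      (exists v, V v /\ on_chain u v) -> (exists v', V v' /\ on_chain u' v') ->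
      0 < r ->
      (pi_preim x (dball u r) `&` V) `<=`
        pi_preim x' (dball u' (Cst * (r + dE u u'))).
Proof.
move=> pB pV _ VS neB neV BV cB cV.
have [m m0 gap] := proj_compact_dE_gap pB pV neB neV BV cB cV.
exists m^-1; split; first by rewrite invr_gt0.
move=> x x' u u' r _ Bx' [u0 _] [u'0 _] _ [_ x'u'] _ _ _ y
  [[_ [_ [z [[z0 [_ zy]] [_ dzu]]]]] Vy].
have dxy := gap _ _ Bx' Vy.
have x'0 : x' != 0 := pB.1 _ Bx'.
have W0 : 0 < wedge2 x' y := wedge2_gt0 (lt_le_trans m0 dxy).
split; first exact: VS.
split.
  move=> [c [c0 yx']]; suff : (B `&` V) y by rewrite BV.
  by split => //; rewrite yx'; apply: pB.2.
exists (hcross (Jvec x') (Jvec y)); split; first exact: is_pi_hcross.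
have [pz0 _] := is_pi_hcross W0; split => //.
apply: (le_trans (dE_hcross_le u0 u'0 z0 x'0 (pV.1 _ Vy) W0 x'u' zy)).
rewrite mulrC ler_pM ?invr_ge0 ?addr_ge0 ?dE_ge0 ?lerD2r //.
by rewrite lef_pV2 ?posrE // (lt_le_trans m0 dxy).
Qed.
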